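(* Let $(A,\star_A,\omega)$ be a quadratic perm algebra and let $P:A\to A$ be either an averaging operator or a derivation of $(A,\star_A)$. Define $x\circ_A y=P(x)\star_A y-x\star_A P(y)$ for all $x,y\in A$. Then $(A,\circ_A)$ is a Leibniz algebra, and $\omega$ is a nondegenerate skew-symmetric $2$-cocycle on $(A,\circ_A)$.
   Context: All vector spaces are finite-dimensional over a field $\mathbb K$ of characteristic zero. A perm algebra is a vector space $A$ with a multiplication $\star_A$ such that $x\star_A(y\star_A z)=(x\star_A y)\star_A z=(y\star_A x)\star_A z$ for all $x,y,z$. A quadratic perm algebra $(A,\star_A,\omega)$ is a perm algebra with a nondegenerate skew-symmetric bilinear form $\omega$ such that $\omega(x\star_A y,z)=\omega(x,y\star_A z-z\star_A y)$ for all $x,y,z$. A linear map $P:A\to A$ is an averaging operator of $(A,\star_A)$ if $P(x)\star_A P(y)=P(P(x)\star_A y)=P(x\star_A P(y))$ for all $x,y$, and a derivation if $P(x\star_A y)=P(x)\star_A y+x\star_A P(y)$ for all $x,y$. A Leibniz algebra is a vector space $A$ with a multiplication $\circ_A$ satisfying $x\circ_A(y\circ_A z)=(x\circ_A y)\circ_A z+y\circ_A(x\circ_A z)$. A bilinear form $\omega$ on a Leibniz algebra $(A,\circ_A)$ is a $2$-cocycle if $\omega(z,x\circ_A y)=\omega(x,y\circ_A z+z\circ_A y)-\omega(y,x\circ_A z)$ for all $x,y,z\in A$. *)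

From mathcomp Require Import all_boot all_order all_algebra.
Set Implicit Arguments. Unset Strict Implicit. Unset Printing Implicit Defensive.
Import GRing.Theory.
Local Open Scope ring_scope.

Section Defs.
Variables (K : fieldType) (A : vectType K).

Definition bilinear_mul (m : A -> A -> A) : Prop :=
  (forall x, linear (m x)) /\ (forall y, linear (m^~ y)).

Definition bilin_form (w : A -> A -> K) : Prop :=
  (forall x, linear (w x : A -> K^o)) /\ (forall y, linear (w^~ y : A -> K^o)).

Definition is_perm_algebra (m : A -> A -> A) : Prop :=
  forall x y z, m x (m y z) = m (m x y) z /\ m (m x y) z = m (m y x) z.

Definition skew_symm_form (w : A -> A -> K) : Prop :=
  forall x y, w x y = - w y x.

Definition nondegen_form (w : A -> A -> K) : Prop :=
  forall x, (forall y, w x y = 0) -> x = 0.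

Definition quadratic_perm_algebra (m : A -> A -> A) (w : A -> A -> K) : Prop :=
  [/\ bilinear_mul m, is_perm_algebra m, bilin_form w, skew_symm_form w &
      nondegen_form w] /\
  (forall x y z, w (m x y) z = w x (m y z - m z y)).

Definition averaging_operator (m : A -> A -> A) (P : A -> A) : Prop :=
  linear P /\
  forall x y, m (P x) (P y) = P (m (P x) y) /\ P (m (P x) y) = P (m x (P y)).

Definition derivation (m : A -> A -> A) (P : A -> A) : Prop :=
  linear P /\ forall x y, P (m x y) = m (P x) y + m x (P y).

Definition is_Leibniz_algebra (c : A -> A -> A) : Prop :=
  forall x y z, c x (c y z) = c (c x y) z + c y (c x z).

Definition is_2_cocycle (c : A -> A -> A) (w : A -> A -> K) : Prop :=
  forall x y z, w z (c x y) = w x (c y z + c z y) - w y (c x z).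

Definition induced_product (m : A -> A -> A) (P : A -> A) : A -> A -> A :=
  fun x y => m (P x) y - m x (P y).

End Defs.

(* The Leibniz identity for [x o y = P x * y - x * P y] is a formal consequence of
   the perm identities and the defining identities of P (no form is involved);
   since the identity has to be checked in the vector space A, we test it on the
   coordinates of a basis, where it becomes a ring identity in K.  The cocycle
   identity, in turn, holds for every map P: the invariance of the skew form
   lets every term [w a (b * c)] be rewritten in terms of [w b (a * c)] and
   [w b (c * a)], after which the six terms cancel in pairs. *)

From mathcomp Require Import all_boot all_order all_algebra.
From mathcomp Require Import ring.
Import GRing.Theory.
Local Open Scope ring_scope.

Lemma eq_vect_coord (K : fieldType) (A : vectType K) (u v : A) :
  (forall i, coord (vbasis fullv) i u = coord (vbasis fullv) i v) -> u = v.
Proof.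
move=> eq_uv; rewrite (coord_vbasis (memvf u)) (coord_vbasis (memvf v)).
by apply: eq_bigr => i _; rewrite eq_uv.
Qed.

Section PermAlgebra.
Variables (K : fieldType) (A : vectType K) (mul : A -> A -> A).
Hypotheses (mul_bilin : bilinear_mul mul) (mul_perm : is_perm_algebra mul).

Lemma perm_mulA x y z : mul x (mul y z) = mul (mul x y) z.
Proof. by case: (mul_perm x y z). Qed.

Lemma perm_mulCl x y z : mul (mul x y) z = mul (mul y x) z.
Proof. by case: (mul_perm x y z). Qed.

Lemma perm_mulDr x : {morph mul x : u v / u + v}.
Proof. by case: (GRing.semilinear_linear (mul_bilin.1 x)). Qed.

Lemma perm_mulBr x : {morph mul x : u v / u - v}.
Proof. exact: zmod_morphism_linear (mul_bilin.1 x). Qed.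

Lemma perm_mulDl y : {morph mul^~ y : u v / u + v}.
Proof. by case: (GRing.semilinear_linear (mul_bilin.2 y)). Qed.

Lemma perm_mulBl y : {morph mul^~ y : u v / u - v}.
Proof. exact: zmod_morphism_linear (mul_bilin.2 y). Qed.

Variable P : A -> A.

Lemma averaging_induced_Leibniz :
  averaging_operator mul P -> is_Leibniz_algebra (induced_product mul P).
Proof.
move=> [P_lin P_avg] x y z; rewrite /induced_product.
have P_mulPl a b : P (mul (P a) b) = mul (P a) (P b) by case: (P_avg a b).
have P_mulPr a b : P (mul a (P b)) = mul (P a) (P b) by case: (P_avg a b) => -> ->.
rewrite !(zmod_morphism_linear P_lin) !P_mulPl !P_mulPr.
rewrite !(perm_mulBr, perm_mulBl, perm_mulA).
rewrite (perm_mulCl (P y) (P x)) (perm_mulCl (P y) x).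
by apply: eq_vect_coord => i; rewrite !linearB !linearD /=; ring.
Qed.

Lemma derivation_induced_Leibniz :
  derivation mul P -> is_Leibniz_algebra (induced_product mul P).
Proof.
move=> [P_lin P_der] x y z; rewrite /induced_product.
rewrite !(zmod_morphism_linear P_lin) !P_der.
rewrite !(perm_mulBr, perm_mulBl, perm_mulDr, perm_mulDl, perm_mulA).
rewrite (perm_mulCl y (P (P x))) (perm_mulCl (P y) x).
rewrite (perm_mulCl (P y) (P x)) (perm_mulCl y x).
by apply: eq_vect_coord => i; rewrite !linearB !linearD /=; ring.
Qed.

End PermAlgebra.

Section InvariantForm.
Variables (K : fieldType) (A : vectType K) (mul : A -> A -> A) (w : A -> A -> K).
Hypotheses (w_bilin : bilin_form w) (w_skew : skew_symm_form w).
Hypothesis w_invariant : forall x y z, w (mul x y) z = w x (mul y z - mul z y).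

Let w_addr x : {morph w x : u v / u + v}.
Proof. by case: (GRing.semilinear_linear (w_bilin.1 x)). Qed.

Let w_subr x : {morph w x : u v / u - v}.
Proof. exact: zmod_morphism_linear (w_bilin.1 x). Qed.

Lemma invariant_form_mulr a b c : w a (mul b c) = w b (mul a c) - w b (mul c a).
Proof. by rewrite w_skew w_invariant w_subr opprB. Qed.

Lemma invariant_form_mulr_swap a b c : w c (mul b a) = - w a (mul b c).
Proof. by rewrite (invariant_form_mulr c) (invariant_form_mulr a) opprB. Qed.

Lemma induced_product_2_cocycle (P : A -> A) :
  is_2_cocycle (induced_product mul P) w.
Proof.
move=> x y z; rewrite /induced_product !(w_subr, w_addr).
rewrite (invariant_form_mulr_swap z (P x) y) (invariant_form_mulr_swap y (P z) x).
rewrite (invariant_form_mulr_swap z (P y) x).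
rewrite (invariant_form_mulr x z (P y)) (invariant_form_mulr x y (P z)).
ring.
Qed.

End InvariantForm.

Theorem proposition2p13 (K : fieldType) (A : vectType K)
  (mul : A -> A -> A) (w : A -> A -> K) (P : A -> A) :
  [pchar K] =i pred0 ->
  quadratic_perm_algebra mul w ->
  (averaging_operator mul P \/ derivation mul P) ->
  is_Leibniz_algebra (induced_product mul P) /\
  [/\ bilin_form w, skew_symm_form w, nondegen_form w &
      is_2_cocycle (induced_product mul P) w].
Proof.
move=> _ [[mul_bilin mul_perm w_bilin w_skew w_nondeg] w_invariant] P_avg_or_der.
split; last by split=> //; exact: induced_product_2_cocycle.
case: P_avg_or_der.
- exact: averaging_induced_Leibniz.
- exact: derivation_induced_Leibniz.
Qed.
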